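(* Let $f(x)=\prod_{a\in\mathcal{F}} f_a(x_a)$ be a factorized model and consider the chance-constrained Bethe free energy Lagrangian \[ \begin{aligned} L[q] &= F[q] + \sum_{i\in \mathcal{V}} \gamma_i \Big[ \int q_i\, dx_i - 1 \Big] + \sum_{a\in \mathcal{F}} \gamma_a \Big[ \int q_a\, dx_a - 1 \Big] \\ &\quad + \sum_{a\in \mathcal{F}} \sum_{i\in \mathcal{V}(a)} \int \zeta_{ia}(x_i)\Big[q_i(x_i) - \int q_a(x_a)\, dx_{a\setminus i}\Big] dx_i + \sum_{i\in \mathcal{V}} \eta_i\Big[\int q_i(x_i)\, g_i(x_i)\, dx_i - (1 - \epsilon)\Big], \end{aligned} \] with $F[q]=-\sum_{a}\int q_a\log f_a\,dx_a+\sum_{a}\int q_a\log q_a\,dx_a-\sum_{i}(d_i-1)\int q_i\log q_i\,dx_i$. For $j\in\mathcal{V}$ let \[ q_j^*(x_j;\eta_j)=\frac{1}{Z_j(\eta_j)}\exp\!\big(-\eta_j g_j(x_j)\big)\prod_{a\in\mathcal{F}(j)}\mu_{aj}(x_j) \] denote the form of the stationary points of $L$ as a functional of $q_j$, where $\mu_{aj}(x_j)=\int f_a(x_a)\prod_{i\in\mathcal{V}(a),i\neq j}\mu_{ia}(x_i)\,dx_{a\setminus j}$, $\mu_{ia}=\exp\zeta_{ia}$, and $Z_j(\eta_j)$ is the normalizer. Define \[ q_j^{(0)}(x_j)=q_j^*(x_j;\eta_j=0),\qquad \Phi_j^{(0)}=\int_{\mathcal{S}_j}q_j^{(0)}(x_j)\,dx_j,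 \] \[ \eta_j^*=\log(\epsilon\,\Phi_j^{(0)})-\log(1-\epsilon)-\log(1-\Phi_j^{(0)}). \] Then, when the chance constraint on $x_j$ is active (i.e. $\int q_j g_j\,dx_j=1-\epsilon$ holds with equality), the stationary points of $L$ as a functional of $q_j$ are of the form \[ q_j^*(x_j;\eta_j=\eta_j^* )=\begin{cases}\dfrac{1-\epsilon}{\Phi_j^{(0)}}\,q_j^{(0)}(x_j) & \text{if } x_j\in\mathcal{S}_j,\\[2mm] \dfrac{\epsilon}{1-\Phi_j^{(0)}}\,q_j^{(0)}(x_j) & \text{otherwise.}\end{cases} \]
   Context: Bipartite factor graph $(\mathcal{F},\mathcal{V},\mathcal{E})$: factor nodes $a\in\mathcal{F}$ with non-negative factor functions $f_a$, variable nodes $i\in\mathcal{V}$, edge $(i,a)$ iff $x_i$ is an argument of $f_a$; $x_a$ collects variables $x_i$, $i\in\mathcal{V}(a)$; $\mathcal{V}(a)$, $\mathcal{F}(i)$ denote neighborhoods, $d_i=|\mathcal{F}(i)|$, and $x_{a\setminus i}$ denotes all variables of $x_a$ except $x_i$. The functional's arguments are beliefs $q_a(x_a)$ and $q_i(x_i)$. A chance constraint on $x_j$ requires $1-\epsilon\le\int_{\mathcal{S}_j}q_j(x_j)\,dx_j=\int q_j g_j\,dx_j$, where $\mathcal{S}_j$ is a ''safe'' region, $g_j$ its indicator function, and $\epsilon\in[0,1]$. $\gamma,\zeta,\eta$ are Lagrange multipliers; stationary points are in the sense of the calculus of variations with marginalization constraints imposed. *)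

From HB Require Import structures.
From mathcomp Require Import all_boot all_order all_algebra.
From mathcomp Require Import all_classical all_reals all_analysis.
Set Implicit Arguments. Unset Strict Implicit. Unset Printing Implicit Defensive.
Import Order.TTheory GRing.Theory Num.Theory.
Local Open Scope classical_set_scope.
Local Open Scope ring_scope.

Section ChanceBethe.
Context {R : realType} {d : measure_display} {T : measurableType d}.

Definition msg_prod (F : finType) (msg : F -> T -> R) (x : T) : R :=
  \prod_(a : F) msg a x.

(* normalizer Z_j(eta) = int exp(-eta g_j) prod mu_aj dx_j, with g_j = \1_S *)
Definition Zj (mu : {measure set T -> \bar R}) (S : set T) (m : T -> R)
  (eta : R) : R :=
  Rintegral mu setT (fun y => expR (- eta * \1_S y) * m y).

Definition qstar (mu : {measure set T -> \bar R}) (S : set T) (m : T -> R)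
  (eta : R) (x : T) : R :=
  expR (- eta * \1_S x) * m x / Zj mu S m eta.

Definition q0 mu S m : T -> R := qstar mu S m 0.
Definition Phi0 mu S m : R := Rintegral mu S (q0 mu S m).

Definition eta_star (eps Phi : R) : R :=
  ln (eps * Phi) - ln (1 - eps) - ln (1 - Phi).

End ChanceBethe.

(* With g_j the indicator of S_j, the tilt exp(-eta g_j) only rescales the mass
   of q_j^(0) inside S_j by E = exp(-eta), so Z_j(eta) = Z_j(0) (1 + (E - 1) Phi)
   with Phi = Phi_j^(0).  An active constraint says that the tilted mass of S_j,
   E Phi / (1 + (E - 1) Phi), equals 1 - eps; then the mass outside is
   (1 - Phi) / (1 + (E - 1) Phi) = eps, and the ratio of the two equations gives
   E = (1 - eps) (1 - Phi) / (eps Phi), i.e. eta = eta_j^*.  The same two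
   equations turn the tilted density into the stated piecewise rescaling of
   q_j^(0). *)
From HB Require Import structures.
From mathcomp Require Import all_boot all_order all_algebra.
From mathcomp Require Import all_classical all_reals all_analysis.
From mathcomp Require Import ring lra.
Import Order.TTheory GRing.Theory Num.Theory.
Local Open Scope classical_set_scope.
Local Open Scope ring_scope.

Definition tilt_norm {R : pzRingType} (E Phi : R) : R := 1 + (E - 1) * Phi.

Section IndicatorTilt.
Context {R : realType} {d : measure_display} {T : measurableType d}.
Variables (mu : {measure set T -> \bar R}) (S : set T) (m : T -> R).
Hypotheses (mS : measurable S) (im : mu.-integrable setT (EFin \o m)).

Lemma integrable_indic_mul :
  mu.-integrable setT (EFin \o (fun y => \1_S y * m y)).
Proof.
apply: (@eq_integrable _ _ _ mu setT measurableT ((EFin \o m) \_ S)) => //.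
  by move=> y _; rewrite /patch /= indicE; case: ifP; rewrite ?mul1r ?mul0r.
by apply/(integrable_mkcond _ mS); apply: integrableS im.
Qed.

Lemma Rintegral_indic_mul :
  Rintegral mu setT (fun y => \1_S y * m y) = Rintegral mu S m.
Proof.
rewrite [RHS]Rintegral_mkcond; apply: eq_Rintegral => y _.
by rewrite /patch indicE; case: ifP; rewrite ?mul1r ?mul0r.
Qed.

Lemma Zj_indic eta :
  Zj mu S m eta = Rintegral mu setT m + (expR (- eta) - 1) * Rintegral mu S m.
Proof.
rewrite /Zj -Rintegral_indic_mul -RintegralZl ?integrable_indic_mul //.
rewrite -RintegralD //; last first.
  have := integrableZl measurableT (expR (- eta) - 1) integrable_indic_mul.
  by apply: eq_integrable => // y _ /=; rewrite EFinM.
apply: eq_Rintegral => y _; rewrite indicE.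
by case: (y \in S); rewrite /= ?mulr1 ?mulr0 ?expR0; ring.
Qed.

Lemma Rintegral_qstar_indic eta :
  Rintegral mu setT (fun x => qstar mu S m eta x * \1_S x) =
  expR (- eta) * Rintegral mu S m / Zj mu S m eta.
Proof.
rewrite -Rintegral_indic_mul mulrAC -RintegralZl ?integrable_indic_mul //.
apply: eq_Rintegral => y _; rewrite /qstar indicE.
by case: (y \in S); rewrite /= ?mulr1 ?mulr0 ?mul0r; ring.
Qed.

Hypothesis M_neq0 : Rintegral mu setT m != 0.

Lemma q0E x : q0 mu S m x = m x / Rintegral mu setT m.
Proof. by rewrite /q0 /qstar Zj_indic oppr0 mul0r expR0 subrr mul0r addr0 mul1r. Qed.

Lemma Phi0E : Phi0 mu S m = Rintegral mu S m / Rintegral mu setT m.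
Proof.
rewrite /Phi0 -RintegralZr //; last exact: integrableS im.
by apply: eq_Rintegral => y _; exact: q0E.
Qed.

Lemma Zj_Phi0 eta :
  Zj mu S m eta =
  Rintegral mu setT m * tilt_norm (expR (- eta)) (Phi0 mu S m).
Proof. by rewrite Zj_indic /tilt_norm Phi0E; field. Qed.

Lemma qstar_Phi0 eta x :
  qstar mu S m eta x =
  expR (- eta * \1_S x) * q0 mu S m x / tilt_norm (expR (- eta)) (Phi0 mu S m).
Proof. by rewrite /qstar q0E Zj_Phi0 invfM !mulrA. Qed.

Lemma Rintegral_qstar_indic_Phi0 eta :
  Rintegral mu setT (fun x => qstar mu S m eta x * \1_S x) =
  expR (- eta) * Phi0 mu S m / tilt_norm (expR (- eta)) (Phi0 mu S m).
Proof. by rewrite Rintegral_qstar_indic Zj_Phi0 invfM Phi0E; ring. Qed.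

End IndicatorTilt.

Section ActiveConstraint.
Context {R : realFieldType} {eps E Phi : R}.
Hypotheses (eps01 : 0 < eps < 1) (E_gt0 : 0 < E) (Phi_ge0 : 0 <= Phi).
Hypothesis active : E * Phi / tilt_norm E Phi = 1 - eps.

Lemma tilt_norm_neq0 : tilt_norm E Phi != 0.
Proof.
case/andP: eps01 => _ eps_lt1; apply/eqP => D0.
by move: active; rewrite D0 invr0 mulr0 => /eqP; rewrite eq_sym subr_eq0 gt_eqF.
Qed.

Lemma active_mass_in : E * Phi = (1 - eps) * tilt_norm E Phi.
Proof. by rewrite -active mulfVK ?tilt_norm_neq0. Qed.

Lemma active_mass_out : 1 - Phi = eps * tilt_norm E Phi.
Proof.
have -> : 1 - Phi = tilt_norm E Phi - E * Phi by rewrite /tilt_norm; ring.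
by rewrite active_mass_in; ring.
Qed.

Lemma active_Phi_neq0 : Phi != 0.
Proof.
case/andP: eps01 => _ eps_lt1; apply/eqP => Phi_eq0.
by move: active_mass_in; rewrite Phi_eq0 /tilt_norm !mulr0 addr0 mulr1 => h; lra.
Qed.

Lemma tilt_norm_gt0 : 0 < tilt_norm E Phi.
Proof.
case/andP: eps01 => _ eps_lt1.
have : 0 < E * Phi by rewrite mulr_gt0 // lt0r active_Phi_neq0.
by rewrite active_mass_in pmulr_rgt0 // subr_gt0.
Qed.

Lemma active_Phi_lt1 : Phi < 1.
Proof.
case/andP: eps01 => eps_gt0 _.
by rewrite -subr_gt0 active_mass_out mulr_gt0 ?tilt_norm_gt0.
Qed.

Lemma tilted_in_active q : E * q / tilt_norm E Phi = (1 - eps) / Phi * q.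
Proof.
rewrite -[1 - eps]active; field.
by rewrite active_Phi_neq0; apply: tilt_norm_neq0.
Qed.

Lemma tilted_out_active q : q / tilt_norm E Phi = eps / (1 - Phi) * q.
Proof.
case/andP: eps01 => eps_gt0 _.
rewrite active_mass_out; field.
by rewrite (lt0r_neq0 eps_gt0) andbT; apply: tilt_norm_neq0.
Qed.

End ActiveConstraint.

Lemma eta_star_active (R : realType) (eps eta Phi : R) :
  0 < eps < 1 -> 0 <= Phi ->
  expR (- eta) * Phi / tilt_norm (expR (- eta)) Phi = 1 - eps ->
  eta = eta_star eps Phi.
Proof.
move=> eps01 Phi_ge0 active; have E_gt0 := expR_gt0 (- eta).
have Phi_gt0 : 0 < Phi by rewrite lt0r (active_Phi_neq0 eps01 active).
have Phi_lt1 : Phi < 1 := active_Phi_lt1 eps01 E_gt0 Phi_ge0 active.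
have /andP[eps_gt0 eps_lt1] := eps01.
have pos (x : R) : 0 < x -> x \is Num.pos by rewrite posrE.
have balance : (eps * Phi) * expR (- eta) = (1 - eps) * (1 - Phi).
  rewrite (active_mass_out eps01 active) -mulrA [Phi * _]mulrC.
  by rewrite (active_mass_in eps01 active); ring.
have := congr1 (@ln R) balance.
by rewrite /eta_star !lnM ?pos ?mulr_gt0 ?subr_gt0 // expRK => h; lra.
Qed.

Theorem theorem1 (R : realType) (d : measure_display) (T : measurableType d)
  (mu : {measure set T -> \bar R}) (F : finType) (msg : F -> T -> R)
  (S : set T) (eps : R) :
  measurable S ->
  (forall a x, 0 <= msg a x) ->
  (forall a, measurable_fun setT (msg a)) ->
  mu.-integrable setT (fun x => (msg_prod msg x)%:E) ->
  0 < Rintegral mu setT (msg_prod msg) ->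
  0 < eps < 1 ->
  forall eta : R,
    Rintegral mu setT
      (fun x => qstar mu S (msg_prod msg) eta x * \1_S x) = 1 - eps ->
    eta = eta_star eps (Phi0 mu S (msg_prod msg)) /\
    forall x : T,
      qstar mu S (msg_prod msg) eta x =
        if x \in S then
          (1 - eps) / Phi0 mu S (msg_prod msg) * q0 mu S (msg_prod msg) x
        else
          eps / (1 - Phi0 mu S (msg_prod msg)) * q0 mu S (msg_prod msg) x.
Proof.
move=> mS msg_ge0 _ im M_gt0 eps01 eta.
set m := msg_prod msg in im M_gt0 *.
have M_neq0 : Rintegral mu setT m != 0 by rewrite gt_eqF.
have Phi_ge0 : 0 <= Phi0 mu S m.
  rewrite Phi0E // divr_ge0 ?(ltW M_gt0) //.
  by apply: Rintegral_ge0 => x _; apply: prodr_ge0.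
rewrite Rintegral_qstar_indic_Phi0 // => active.
split; first exact: eta_star_active active.
move=> x; rewrite qstar_Phi0 // indicE.
case: (x \in S); rewrite /= ?mulr1 ?mulr0 ?expR0 ?mul1r.
- exact: tilted_in_active.
- exact: tilted_out_active.
Qed.
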